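(* Let $\xi,\eta\in\mathbb R^3$ and suppose that the triangle formed by $\xi,\xi-\eta,\eta$ is non-degenerate in the sense that one of its three corner angles lies in $[2^{-5},\pi-2^{-5}]$, and that $|\Lambda(\zeta)|\ge2^{-5}$ for some $\zeta\in\{\xi,\xi-\eta,\eta\}$. Then $$|\bar\sigma|\sim\min\{|\xi|,|\xi-\eta|,|\eta|\}\cdot\max\{|\xi|,|\xi-\eta|,|\eta|\},$$ with absolute implicit constants.
   Context: $\Lambda(\zeta)=\zeta_3/|\zeta|$. $\bar\sigma=\xi_3\eta_h-\eta_3\xi_h\in\mathbb R^2$, where $\xi=(\xi_h,\xi_3)$, $\eta=(\eta_h,\eta_3)$. $A\sim B$ means $c^{-1}B\le A\le cB$ for an absolute constant $c$. *)

From HB Require Import structures.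
From mathcomp Require Import all_boot all_order all_algebra.
From mathcomp Require Import all_classical all_reals all_analysis.
Set Implicit Arguments. Unset Strict Implicit. Unset Printing Implicit Defensive.
Import Order.TTheory GRing.Theory Num.Theory.
Local Open Scope ring_scope.

Section Defs.
Variable R : realType.

Definition dot3 (u v : 'rV[R]_3) : R := \sum_(i < 3) u ord0 i * v ord0 i.
Definition norm3 (u : 'rV[R]_3) : R := Num.sqrt (dot3 u u).

Definition c1 (u : 'rV[R]_3) : R := u ord0 0.
Definition c2 (u : 'rV[R]_3) : R := u ord0 1.
Definition c3 (u : 'rV[R]_3) : R := u ord0 2.

Definition Lambda (z : 'rV[R]_3) : R := c3 z / norm3 z.

(* |sigma_bar| for sigma_bar = xi_3 eta_h - eta_3 xi_h in R^2 *)
Definition sigma_bar_norm (xi eta : 'rV[R]_3) : R :=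
  Num.sqrt ((c3 xi * c1 eta - c3 eta * c1 xi) ^+ 2 +
            (c3 xi * c2 eta - c3 eta * c2 xi) ^+ 2).

Definition angle3 (u v : 'rV[R]_3) : R := acos (dot3 u v / (norm3 u * norm3 v)).

Definition good_angle (a : R) (u v : 'rV[R]_3) : Prop :=
  u != 0 /\ v != 0 /\ a <= angle3 u v <= pi - a.

(* Corner angles: at 0 between xi and eta;
   at xi between -xi and eta - xi; at eta between -eta and xi - eta. *)
Definition triangle_nondeg (a : R) (xi eta : 'rV[R]_3) : Prop :=
  good_angle a xi eta \/ good_angle a (- xi) (eta - xi) \/
  good_angle a (- eta) (xi - eta).
End Defs.

(* Write [w] for the cross product of [xi] and [eta]; [sigma_bar] is the
   horizontal part of [w] turned by a right angle, so [|sigma_bar| = |w_h|].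
   Any two sides of the triangle have cross product [w] up to sign, so [|w|] is
   at most the product of any two side lengths, in particular at most [m M];
   at a corner with angle in [[a, pi - a]] it is at least [sin a] times the
   product of the two adjacent sides, which is at least [m M / 2] by the
   triangle inequality.  Finally the side [zeta] lies in the plane orthogonal
   to [w], and Bessel's inequality for [e3] against the orthogonal unit vectors
   [zeta / |zeta|] and [w / |w|] gives [|w_h| >= |Lambda zeta| |w|], so [w] is
   far from vertical and [|w_h|] is comparable to [|w|]. *)

From HB Require Import structures.
From mathcomp Require Import all_boot all_order all_algebra.
From mathcomp Require Import all_classical all_reals all_analysis.
From mathcomp Require Import lra ring.
Set Implicit Arguments.
Unset Strict Implicit.
Unset Printing Implicit Defensive.
Import Order.TTheory GRing.Theory Num.Theory.
Local Open Scope ring_scope.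

Section MinMax.
Variable R : realDomainType.

Lemma mul_le_2mul (m M x y : R) :
  0 <= m -> m <= x -> m <= y -> M <= x + y -> m * M <= 2 * (x * y).
Proof. by move=> m0 mx my Mxy; nra. Qed.

Lemma le_min3_mul_max3 (a b e X : R) : 0 <= a -> 0 <= b -> 0 <= e ->
  X <= a * b -> X <= a * e -> X <= b * e ->
  X <= Num.min a (Num.min b e) * Num.max a (Num.max b e).
Proof.
move=> a0 b0 e0 Xab Xae Xbe.
by have [be|be] := leP b e; have [ab|ab] := leP a b; have [ae|ae] := leP a e;
  nra.
Qed.

End MinMax.

Section Vectors3.
Variable R : realType.
Implicit Types u v w z : 'rV[R]_3.

Lemma row3P u v : c1 u = c1 v -> c2 u = c2 v -> c3 u = c3 v -> u = v.
Proof.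
move=> e1 e2 e3; apply/rowP => -[[|[|[|//]]] i].
- by rewrite (_ : Ordinal i = 0) //; apply: val_inj.
- by rewrite (_ : Ordinal i = 1) //; apply: val_inj.
- by rewrite (_ : Ordinal i = 2) //; apply: val_inj.
Qed.

Lemma dot3E u v : dot3 u v = c1 u * c1 v + c2 u * c2 v + c3 u * c3 v.
Proof.
rewrite /dot3 !big_ord_recr big_ord0 /= add0r /c1 /c2 /c3.
by congr (_ * _ + _ * _ + _ * _); congr (_ _ _); apply: val_inj.
Qed.

Lemma dot3Bl u v w : dot3 (u - v) w = dot3 u w - dot3 v w.
Proof. by rewrite /dot3 -sumrB; apply: eq_bigr => i _; rewrite !mxE mulrBl. Qed.

Lemma dot3_ge0 u : 0 <= dot3 u u.
Proof. by apply: sumr_ge0 => i _; rewrite -expr2 sqr_ge0. Qed.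

Lemma dot3_eq0 u : (dot3 u u == 0) = (u == 0).
Proof.
apply/eqP/eqP => [u0|->]; last by rewrite /dot3 big1 // => i _; rewrite mxE mulr0.
apply/rowP => i; apply/eqP; rewrite mxE -sqrf_eq0 expr2; apply/eqP.
by apply: (psumr_eq0P _ u0) => // j _; rewrite -expr2 sqr_ge0.
Qed.

Lemma norm3_ge0 u : 0 <= norm3 u.
Proof. exact: sqrtr_ge0. Qed.

Lemma norm3_sqr u : norm3 u ^+ 2 = dot3 u u.
Proof. exact/sqr_sqrtr/dot3_ge0. Qed.

Lemma norm3_gt0 u : u != 0 -> 0 < norm3 u.
Proof. by rewrite sqrtr_gt0 lt_def dot3_eq0 dot3_ge0 andbT. Qed.

Lemma norm3N u : norm3 (- u) = norm3 u.
Proof.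
by rewrite /norm3 /dot3; congr Num.sqrt; apply: eq_bigr => i _; rewrite mxE mulrNN.
Qed.

Lemma norm3B u v : norm3 (u - v) = norm3 (v - u).
Proof. by rewrite -opprB norm3N. Qed.

Definition cross3 u v : 'rV[R]_3 :=
  \row_(i < 3) [:: c2 u * c3 v - c3 u * c2 v; c3 u * c1 v - c1 u * c3 v;
                   c1 u * c2 v - c2 u * c1 v]`_i.

Lemma dot3_cross3 u v :
  dot3 (cross3 u v) (cross3 u v) = dot3 u u * dot3 v v - dot3 u v ^+ 2.
Proof. by rewrite !dot3E /cross3 /c1 /c2 /c3 !mxE /=; ring. Qed.

Lemma dot3_cross3l u v : dot3 u (cross3 u v) = 0.
Proof. by rewrite !dot3E /cross3 /c1 /c2 /c3 !mxE /=; ring. Qed.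

Lemma dot3_cross3r u v : dot3 v (cross3 u v) = 0.
Proof. by rewrite !dot3E /cross3 /c1 /c2 /c3 !mxE /=; ring. Qed.

Lemma cross3C u v : cross3 v u = - cross3 u v.
Proof. by apply: row3P; rewrite /cross3 /c1 /c2 /c3 !mxE /=; ring. Qed.

Lemma cross3NB u v : cross3 (- u) (v - u) = - cross3 u v.
Proof. by apply: row3P; rewrite /cross3 /c1 /c2 /c3 !mxE /=; ring. Qed.

Lemma dot3_norm3_le u v : `|dot3 u v| <= norm3 u * norm3 v.
Proof.
rewrite -ler_sqr ?nnegrE ?normr_ge0 ?mulr_ge0 ?norm3_ge0 // real_normK ?num_real //.
by rewrite exprMn !norm3_sqr -subr_ge0 -dot3_cross3 dot3_ge0.
Qed.

Lemma norm3_cross3_le u v : norm3 (cross3 u v) <= norm3 u * norm3 v.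
Proof.
rewrite -ler_sqr ?nnegrE ?mulr_ge0 ?norm3_ge0 //.
by rewrite exprMn !norm3_sqr dot3_cross3 gerBl sqr_ge0.
Qed.

Lemma norm3D_le u v : norm3 (u + v) <= norm3 u + norm3 v.
Proof.
rewrite -ler_sqr ?nnegrE ?addr_ge0 ?norm3_ge0 //.
have -> : norm3 (u + v) ^+ 2 = norm3 u ^+ 2 + 2 * dot3 u v + norm3 v ^+ 2.
  by rewrite !norm3_sqr !dot3E /c1 /c2 /c3 !mxE; ring.
have := ler_normlW (dot3_norm3_le u v); nra.
Qed.

Definition hnorm3 u : R := Num.sqrt (c1 u ^+ 2 + c2 u ^+ 2).

Lemma hnorm3_cross3 u v : hnorm3 (cross3 u v) = sigma_bar_norm u v.
Proof.
rewrite /hnorm3 /sigma_bar_norm /cross3 /c1 /c2 /c3 !mxE /=.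
by congr Num.sqrt; ring.
Qed.

Lemma hnorm3_le_norm3 u : hnorm3 u <= norm3 u.
Proof. by apply: ler_wsqrtr; rewrite dot3E -!expr2 lerDl sqr_ge0. Qed.

(* [z = 0] is allowed, since [Lambda 0 = 0] (division by zero). *)
Lemma Lambda_norm3_le z w : dot3 z w = 0 -> `|Lambda z| * norm3 w <= hnorm3 w.
Proof.
move=> zw0; have [->|z0] := eqVneq z 0.
  by rewrite /Lambda /c3 mxE mul0r normr0 mul0r sqrtr_ge0.
have z_gt0 := norm3_gt0 z0.
rewrite /Lambda normrM normfV (gtr0_norm z_gt0) mulrAC ler_pdivrMr //.
rewrite -ler_sqr ?nnegrE ?mulr_ge0 ?norm3_ge0 ?sqrtr_ge0 //.
rewrite !exprMn real_normK ?num_real // !norm3_sqr sqr_sqrtr ?addr_ge0 ?sqr_ge0 //.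
rewrite -subr_ge0.
have -> : (c1 w ^+ 2 + c2 w ^+ 2) * dot3 z z - c3 z ^+ 2 * dot3 w w =
    (c1 z * c2 w - c2 z * c1 w) ^+ 2 + (dot3 z w - 2 * (c3 z * c3 w)) * dot3 z w.
  by rewrite !dot3E; ring.
by rewrite zw0 mulr0 addr0 sqr_ge0.
Qed.

End Vectors3.

Section Angles.
Variable R : realType.

Lemma le_cos_of_le_acos (a t : R) :
  0 <= a <= pi -> -1 <= t <= 1 -> a <= acos t -> t <= cos a.
Proof.
move=> a_pi t1 le_a; rewrite -[t in t <= _](@acosK R) ?in_itv //=.
by rewrite leNgt ltr_cos ?in_itv /= ?acos_ge0 ?acos_lepi // -leNgt.
Qed.

Lemma abs_le_cos_of_acos (a t : R) :
  0 <= a -> -1 <= t <= 1 -> a <= acos t <= pi - a -> `|t| <= cos a.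
Proof.
move=> a0 t1 /andP[lo hi].
have a_pi : 0 <= a <= pi by rewrite a0 /=; have := acos_ge0 t1; lra.
rewrite ler_norml le_cos_of_le_acos // andbT lerNl.
apply: le_cos_of_le_acos => //; first lra.
by rewrite acosN //; lra.
Qed.

Lemma good_angle_norm3_cross3 (a : R) u v : 0 <= a -> good_angle a u v ->
  sin a * (norm3 u * norm3 v) <= norm3 (cross3 u v).
Proof.
move=> a0 [u0 [v0 ang]].
have uv_gt0 : 0 < norm3 u * norm3 v by rewrite mulr_gt0 ?norm3_gt0.
move: ang; rewrite /angle3; set t := dot3 u v / _ => ang.
have dotE : dot3 u v = t * (norm3 u * norm3 v) by rewrite divfK ?gt_eqF.
have t1 : -1 <= t <= 1.
  rewrite -ler_norml normrM normfV (gtr0_norm uv_gt0) ler_pdivrMr //.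
  by rewrite mul1r dot3_norm3_le.
have tc := abs_le_cos_of_acos a0 t1 ang.
have sa0 : 0 <= sin a by apply: sin_ge0_pi; have := acos_ge0 t1; lra.
rewrite -ler_sqr ?nnegrE ?mulr_ge0 ?norm3_ge0 // norm3_sqr dot3_cross3 dotE.
clearbody t; rewrite -!norm3_sqr -exprMn !exprMn sin2cos2 -(real_normK (num_real t)).
have t2 : `|t| ^+ 2 <= cos a ^+ 2 by rewrite ler_sqr ?nnegrE // (le_trans _ tc).
have := sqr_ge0 (norm3 u * norm3 v); nra.
Qed.

End Angles.

Section Triangle.
Variable R : realType.
Variables xi eta : 'rV[R]_3.

Let m := Num.min (norm3 xi) (Num.min (norm3 (xi - eta)) (norm3 eta)).
Let M := Num.max (norm3 xi) (Num.max (norm3 (xi - eta)) (norm3 eta)).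
Let w := cross3 xi eta.

Lemma dot3_cross3_side z : z \in [:: xi; xi - eta; eta] -> dot3 z w = 0.
Proof.
by rewrite !inE => /or3P[] /eqP->; rewrite ?dot3Bl ?dot3_cross3l ?dot3_cross3r ?subr0.
Qed.

Lemma norm3_cross3_corners :
  norm3 (cross3 (- xi) (eta - xi)) = norm3 w /\
  norm3 (cross3 (- eta) (xi - eta)) = norm3 w.
Proof. by rewrite !cross3NB (cross3C xi eta) opprK !norm3N. Qed.

Lemma norm3_cross3_le_min_max : norm3 w <= m * M.
Proof.
have [wl wr] := norm3_cross3_corners.
apply: le_min3_mul_max3; rewrite ?norm3_ge0 //.
- by have := norm3_cross3_le (- xi) (eta - xi); rewrite wl norm3N norm3B.
- exact: norm3_cross3_le.
- by have := norm3_cross3_le (- eta) (xi - eta); rewrite wr norm3N mulrC.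
Qed.

Lemma max_side_le_sum :
  [/\ M <= norm3 xi + norm3 eta, M <= norm3 xi + norm3 (xi - eta) &
      M <= norm3 (xi - eta) + norm3 eta].
Proof.
have t1 : norm3 xi <= norm3 (xi - eta) + norm3 eta.
  by have := norm3D_le (xi - eta) eta; rewrite subrK.
have t2 : norm3 (xi - eta) <= norm3 xi + norm3 eta.
  by have := norm3D_le xi (- eta); rewrite norm3N.
have t3 : norm3 eta <= norm3 xi + norm3 (xi - eta).
  by have := norm3D_le xi (eta - xi); rewrite addrC subrK norm3B.
by rewrite /M !ge_max t1 t2 t3 !lerDl !lerDr !norm3_ge0.
Qed.

Lemma min_side_le :
  [/\ 0 <= m, m <= norm3 xi, m <= norm3 (xi - eta) & m <= norm3 eta].
Proof. by rewrite /m !le_min !ge_min !lexx !norm3_ge0 !orbT. Qed.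

Lemma good_angle_min_max_le (a : R) u v : 0 <= a -> good_angle a u v ->
  m <= norm3 u -> m <= norm3 v -> M <= norm3 u + norm3 v ->
  sin a * (m * M) <= 2 * norm3 (cross3 u v).
Proof.
move=> a0 ang mu mv Muv; have [m0 _ _ _] := min_side_le.
have sa0 : 0 <= sin a.
  by apply: sin_ge0_pi; case: ang => _ [_ /andP[lo hi]]; rewrite a0 /=; lra.
apply: le_trans (ler_wpM2l sa0 (mul_le_2mul m0 mu mv Muv)) _.
by rewrite mulrCA ler_wpM2l // good_angle_norm3_cross3.
Qed.

Lemma triangle_nondeg_min_max_le (a : R) : 0 <= a -> triangle_nondeg a xi eta ->
  sin a * (m * M) <= 2 * norm3 w.
Proof.
have [wl wr] := norm3_cross3_corners; have [Mxe Mxd Mde] := max_side_le_sum.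
have [_ mx md me] := min_side_le.
move=> a0 [ang|[ang|ang]].
- exact: good_angle_min_max_le.
- rewrite -wl; apply: good_angle_min_max_le;
    by rewrite ?norm3N ?[norm3 (eta - xi)]norm3B.
- by rewrite -wr; apply: good_angle_min_max_le; rewrite ?norm3N // addrC.
Qed.

End Triangle.

Theorem lemma6p2 (R : realType) :
  exists c : R, 1 <= c /\
  forall xi eta : 'rV[R]_3,
    triangle_nondeg (2^-5) xi eta ->
    (exists2 zeta, zeta \in [:: xi; xi - eta; eta] & 2^-5 <= `|Lambda zeta|) ->
    let m := Num.min (norm3 xi) (Num.min (norm3 (xi - eta)) (norm3 eta)) in
    let M := Num.max (norm3 xi) (Num.max (norm3 (xi - eta)) (norm3 eta)) in
    c^-1 * (m * M) <= sigma_bar_norm xi eta <= c * (m * M).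
Proof.
pose a : R := 2^-5.
have a_gt0 : 0 < a by rewrite invr_gt0 exprn_gt0.
have a_le1 : a <= 1 by rewrite /a invf_le1 ?exprn_gt0 // exprn_ege1 // ler1n.
have sa_gt0 : 0 < sin a by apply: sin_gt0_pi; have := pi_ge2 R; lra.
have c_ge1 : 1 <= 2 / (a * sin a).
  by rewrite ler_pdivlMr ?mulr_gt0 // mul1r; have := sin_le1 a; nra.
exists (2 / (a * sin a)); split => //.
move=> xi eta nondeg [z z_side Lz] /=.
have w_le := norm3_cross3_le_min_max xi eta.
have w_ge := triangle_nondeg_min_max_le (ltW a_gt0) nondeg.
have h_ge : a * norm3 (cross3 xi eta) <= hnorm3 (cross3 xi eta).
  apply: le_trans (Lambda_norm3_le (dot3_cross3_side z_side)).
  by rewrite ler_wpM2r ?norm3_ge0.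
rewrite -hnorm3_cross3.
set m := Num.min _ _ in w_le w_ge *; set M := Num.max _ _ in w_le w_ge *.
set w := cross3 xi eta in w_le w_ge h_ge *.
apply/andP; split.
  rewrite invf_div mulrAC ler_pdivrMr // -mulrA.
  apply: le_trans (ler_wpM2l (ltW a_gt0) w_ge) _.
  by rewrite mulrCA mulrC ler_wpM2r.
have mM_ge0 : 0 <= m * M := le_trans (norm3_ge0 w) w_le.
apply: le_trans (hnorm3_le_norm3 w) _; apply: le_trans w_le _.
exact: ler_peMl.
Qed.
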